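(* Let $m>n$ be positive integers and let $G[V_1,V_2]$ be a balanced bipartite graph on $2(m+n-1)$ vertices (so $|V_1|=|V_2|=m+n-1$) with minimum degree $\delta(G)>\frac{3}{4}(m+n-1)$. Suppose a red-blue coloring of the edges of $G$ has no blue connected $n$-matching. Suppose further that $\mathcal{B}$ is a largest blue component of $G$ (one with the maximum number of vertices among all blue components) and that $|V(\mathcal{B})\cap V_i|\ge n$ for each $i\in\{1,2\}$. Let $S$ be a minimum vertex cover of $\mathcal{B}$. Then there is a red component of $G$ containing $V(\mathcal{B})\setminus S$.
   Context: For a red-blue edge coloring of $G$, the red subgraph (resp. blue subgraph) is the spanning subgraph of $G$ consisting of all red (resp. blue) edges; a red (blue) component is a connected component of it. A connected $k$-matching in a graph $H$ is a matching with $k$ edges all lying in a single connected component of $H$; a blue connected $k$-matching is a connected $k$-matching in the blue subgraph. A vertex cover of a graph is a set of vertices containing at least one endpoint of every edge; a minimum vertex cover is one of smallest size. *)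

From mathcomp Require Import all_boot.
Set Implicit Arguments. Unset Strict Implicit. Unset Printing Implicit Defensive.

Section Defs.
Variable T : finType.

Definition bipartite_graph (adj : rel T) (V1 V2 : {set T}) : Prop :=
  [/\ symmetric adj, irreflexive adj,
      [disjoint V1 & V2], V1 :|: V2 = setT &
      forall x y, adj x y -> (x \in V1) && (y \in V2) || (x \in V2) && (y \in V1)].

Definition deg (adj : rel T) (x : T) : nat := #|[set y | adj x y]|.

(* A red-blue colouring: col x y = true means the edge xy is red;
   it must not depend on the orientation of the edge. *)
Definition coloring (adj : rel T) (col : T -> T -> bool) : Prop :=
  forall x y, adj x y -> col x y = col y x.

Definition red_rel (adj : rel T) (col : T -> T -> bool) : rel T :=
  [rel x y | adj x y && col x y].
Definition blue_rel (adj : rel T) (col : T -> T -> bool) : rel T :=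
  [rel x y | adj x y && ~~ col x y].

Definition component (H : rel T) (v : T) : {set T} := [set u | connect H v u].

Definition is_component (H : rel T) (C : {set T}) : Prop :=
  exists v, C = component H v.

Definition connected_matching (H : rel T) (k : nat) : Prop :=
  exists M : {set T * T},
    [/\ #|M| = k,
        forall e, e \in M -> H e.1 e.2,
        forall e f, e \in M -> f \in M -> e != f ->
          [disjoint [set e.1; e.2] & [set f.1; f.2]] &
        exists v, forall e, e \in M -> e.1 \in component H v].

Definition vertex_cover_of (H : rel T) (C S : {set T}) : Prop :=
  S \subset C /\
  forall x y, x \in C -> y \in C -> H x y -> (x \in S) || (y \in S).

Definition min_vertex_cover_of (H : rel T) (C S : {set T}) : Prop :=
  vertex_cover_of H C S /\
  forall S', vertex_cover_of H C S' -> #|S| <= #|S'|.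
End Defs.

From mathcomp Require Import all_boot zify.
Set Implicit Arguments. Unset Strict Implicit. Unset Printing Implicit Defensive.

(* Write N = m + n - 1 and R = B \ S.  A minimum vertex cover of a bipartite
   graph can be matched into its complement (Hall's theorem), so the absence
   of a blue connected n-matching inside B forces |S| < n.  Every edge from R
   to a vertex outside S is red.  Two vertices of R on the same side have more
   than N/2 >= n > |S| common neighbours, hence a red path of length 2.  For
   x in R on side V1 and y in R on side V2, either some edge joins the two
   sides of R (it is red), or each side of R has fewer than N/4 vertices; then
   either a red edge joins N(x) \ S to N(y) \ S, or these two sets, each of
   size more than N/2, span a blue component larger than B. *)

Lemma disjoint_setD (T : finType) (A B : {set T}) : [disjoint A & B :\: A].
Proof. by rewrite -setI_eq0 setIDA setIC setDIl setDv setI0. Qed.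

Lemma exists_subset_card (T : finType) (A : {set T}) k :
  k <= #|A| -> exists2 B : {set T}, B \subset A & #|B| = k.
Proof.
move=> lekA; exists [set x in take k (enum A)].
  by apply/subsetP=> x; rewrite inE => /mem_take; rewrite mem_enum.
by rewrite cardsE (card_uniqP _) ?take_uniq ?enum_uniq // size_takel // -cardE.
Qed.

Lemma leq_card_setI (T : finType) (X Y W : {set T}) :
  X \subset W -> Y \subset W -> #|X| + #|Y| <= #|X :&: Y| + #|W|.
Proof.
move=> XW YW; rewrite -cardsUI addnC leq_add2l.
by apply: subset_leq_card; rewrite subUset XW.
Qed.

Lemma exists_notin (T : finType) (A Z : {set T}) :
  #|Z| < #|A| -> exists2 z, z \in A & z \notin Z.
Proof.
by move=> ltZA; apply/subsetPn; apply: contraTN ltZA => /subset_leq_card; rewrite leqNgt.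
Qed.

Section Matching.
Variables (T : finType) (E : rel T).

Definition nbhd (Bs X : {set T}) : {set T} := [set b in Bs | [exists a in X, E a b]].

Definition matches_into (A Bs : {set T}) (f : T -> T) : Prop :=
  {in A &, injective f} /\ {in A, forall a, f a \in Bs /\ E a (f a)}.

Lemma nbhdU (Bs X Y : {set T}) : nbhd Bs (X :|: Y) = nbhd Bs X :|: nbhd Bs Y.
Proof.
apply/setP=> b; rewrite !inE -andb_orr; congr (_ && _).
apply/existsP/orP=> [[a /andP[]]|].
  by rewrite inE => /orP[aX|aY] Eab; [left|right]; apply/existsP; exists a; apply/andP.
by case=> /existsP[a /andP[aXY Eab]]; exists a; rewrite inE aXY ?orbT.
Qed.

Lemma nbhdD (Bs C X : {set T}) : nbhd (Bs :\: C) X = nbhd Bs X :\: C.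
Proof. by apply/setP=> b; rewrite !inE -andbA. Qed.

Lemma nbhd_nbhd (Bs X Y : {set T}) : Y \subset X -> nbhd (nbhd Bs X) Y = nbhd Bs Y.
Proof.
move=> /subsetP YX; apply/setP=> b; rewrite !inE -andbA; congr (_ && _).
by rewrite andb_idl //; case/existsP=> a /andP[aY Eab]; apply/existsP; exists a; rewrite YX.
Qed.

Lemma matches_intoU (A1 A2 B1 B2 : {set T}) f1 f2 :
    matches_into A1 B1 f1 -> matches_into A2 B2 f2 -> [disjoint B1 & B2] ->
  matches_into (A1 :|: A2) (B1 :|: B2) (fun x => if x \in A1 then f1 x else f2 x).
Proof.
move=> [inj1 f1A] [inj2 f2A] dB; split=> [x y|x].
  rewrite !inE; case: (boolP (x \in A1)) => x1; case: (boolP (y \in A1)) => y1 //=.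
  - by move=> _ _; apply: inj1.
  - move=> _ y2 eq; have [fx _] := f1A x x1; have [fy _] := f2A y y2.
    by move: (disjointFr dB fx); rewrite eq fy.
  - move=> x2 _ eq; have [fx _] := f2A x x2; have [fy _] := f1A y y1.
    by move: (disjointFr dB fy); rewrite -eq fx.
  - by apply: inj2.
rewrite inE; case: (boolP (x \in A1)) => [x1 _|_ /= x2].
  by have [fx Ex] := f1A x x1; rewrite inE fx.
by have [fx Ex] := f2A x x2; rewrite inE fx orbT.
Qed.

Lemma matches_intoU1 (A Bs : {set T}) f a b :
    matches_into (A :\ a) (Bs :\ b) f -> b \in Bs -> E a b ->
  matches_into A Bs (fun x => if x == a then b else f x).
Proof.
move=> [inj fA] bB Eab.
have fA' x : x \in A -> x != a -> f x \in Bs :\ b /\ E x (f x).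
  by move=> xA xa; apply: fA; rewrite !inE xa.
split=> [x y xA yA|x xA].
  case: eqP => [->|/eqP xa]; case: eqP => [->|/eqP ya] // eq.
  - by have [] := fA' y yA ya; rewrite -eq !inE eqxx.
  - by have [] := fA' x xA xa; rewrite eq !inE eqxx.
  - by apply: inj; rewrite // !inE ?xa ?ya.
case: eqP => [->|/eqP xa] //.
by have [] := fA' x xA xa; rewrite inE => /andP[].
Qed.

Definition hall_condition (A Bs : {set T}) : Prop :=
  forall X : {set T}, X \subset A -> #|X| <= #|nbhd Bs X|.

Lemma hall_condition_tight (A Bs X : {set T}) :
    hall_condition A Bs -> X \subset A -> #|nbhd Bs X| <= #|X| ->
  hall_condition X (nbhd Bs X) /\ hall_condition (A :\: X) (Bs :\: nbhd Bs X).
Proof.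
move=> hallA XA tightX; split=> Y YX.
  by rewrite nbhd_nbhd //; apply: hallA (subset_trans YX XA).
have YA : Y \subset A := subset_trans YX (subsetDl _ _).
have YX0 : Y :&: X = set0.
  apply/setP=> x; rewrite !inE; apply/negP=> /andP[xY xX].
  by move: (subsetP YX x xY); rewrite inE xX.
have := hallA (Y :|: X); rewrite subUset YA XA nbhdU nbhdD => /(_ isT).
have := cardsUI Y X; have := cardsUI (nbhd Bs Y) (nbhd Bs X).
rewrite YX0 cards0 cardsD; lia.
Qed.

Lemma hall_condition_remove (A Bs : {set T}) a b :
    (forall Y : {set T}, Y \subset A -> Y != set0 -> Y != A -> #|Y| < #|nbhd Bs Y|) ->
    a \in A -> hall_condition (A :\ a) (Bs :\ b).
Proof.
move=> expand aA Y YAa; rewrite nbhdD.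
have [->|Y0] := eqVneq Y set0; first by rewrite cards0.
have YnA : Y != A.
  by apply/eqP=> YA; move: (subsetP YAa a); rewrite YA aA !inE eqxx => /(_ isT).
have := expand Y (subset_trans YAa (subD1set _ _)) Y0 YnA.
rewrite (cardsD1 b (nbhd Bs Y)); lia.
Qed.

Lemma hall (A Bs : {set T}) : hall_condition A Bs -> exists f, matches_into A Bs f.
Proof.
have [k] := ubnP #|A|; elim: k A Bs => // k IH A Bs ltAk hallA.
have [->|[a aA]] := set_0Vmem A; first by exists id; split=> x; rewrite inE.
case: (boolP [exists X : {set T},
               [&& X \subset A, X != set0, X != A & #|nbhd Bs X| <= #|X|]]).
  case/existsP=> X /and4P[XA X0 XnA tightX].
  have [hallX hallAX] := hall_condition_tight hallA XA tightX.
  have ltXA : #|X| < #|A| by apply: proper_card; rewrite properEneq XnA.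
  have ltAX : #|A :\: X| < #|A|.
    by rewrite cardsDS // ltn_subrL !card_gt0 X0; apply/set0Pn; exists a.
  have [f1 mf1] := IH X (nbhd Bs X) (leq_trans ltXA ltAk) hallX.
  have [f2 mf2] := IH (A :\: X) (Bs :\: nbhd Bs X) (leq_trans ltAX ltAk) hallAX.
  have nbhdXB : nbhd Bs X \subset Bs by apply/subsetP=> x; rewrite inE => /andP[].
  have := matches_intoU mf1 mf2 (disjoint_setD _ _).
  rewrite -{1}(setIidPr XA) -{1}(setIidPr nbhdXB) !setID.
  by exists (fun x => if x \in X then f1 x else f2 x).
move/existsPn=> loose.
have expand (Y : {set T}) : Y \subset A -> Y != set0 -> Y != A -> #|Y| < #|nbhd Bs Y|.
  by move=> YA Y0 YnA; have := loose Y; rewrite YA Y0 YnA ltnNge.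
have : 0 < #|nbhd Bs [set a]| by have := hallA [set a]; rewrite sub1set cards1 aA; apply.
case/card_gt0P=> b; rewrite inE => /andP[bB /existsP[a' /andP[]]].
rewrite inE => /eqP-> Eab.
have ltAa : #|A :\ a| < #|A| by rewrite (cardsD1 a A) aA.
have hallAa := hall_condition_remove b expand aA.
have [f mf] := IH (A :\ a) (Bs :\ b) (leq_trans ltAa ltAk) hallAa.
by exists (fun x => if x == a then b else f x); apply: matches_intoU1.
Qed.

Definition bicover (A Bs K : {set T}) : Prop :=
  forall a b, a \in A -> b \in Bs -> E a b -> (a \in K) || (b \in K).

Lemma min_bicover_hall (A Bs K : {set T}) :
    [disjoint A & Bs] -> bicover A Bs K ->
    (forall K', bicover A Bs K' -> #|K| <= #|K'|) ->
  hall_condition (K :&: A) (Bs :\: K).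
Proof.
move=> dAB coverK minK X XKA; rewrite leqNgt; apply/negP=> deficient.
have XnB b : b \in Bs -> b \notin X.
  move=> bB; apply: contraFN (disjointFl dAB bB).
  by move=> /(subsetP XKA); rewrite inE => /andP[].
pose K' := (K :\: X) :|: nbhd (Bs :\: K) X.
have coverK' : bicover A Bs K'.
  move=> a b aA bB Eab; rewrite !in_setU !in_setD (negbTE (XnB b bB)) /=.
  case: (boolP (a \in X)) => aX /=.
    case: (boolP (b \in K)) => bK; rewrite ?orbT //=.
    by apply/orP; right; rewrite !inE bK bB; apply/existsP; exists a; rewrite aX.
  by case/orP: (coverK a b aA bB Eab) => ->; rewrite ?orbT.
have XK : X \subset K := subset_trans XKA (subsetIl K A).
have := minK K' coverK'; rewrite /K'.
have := (leq_card_setU (K :\: X) (nbhd (Bs :\: K) X)).1.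
have := subset_leq_card XK; rewrite cardsDS //; lia.
Qed.

Lemma bicoverC (A Bs K : {set T}) : symmetric E -> bicover A Bs K -> bicover Bs A K.
Proof. by move=> symE coverK b a bB aA Eba; rewrite orbC coverK // symE. Qed.

Lemma min_bicover_matching (A Bs K : {set T}) :
    symmetric E -> [disjoint A & Bs] -> K \subset A :|: Bs -> bicover A Bs K ->
    (forall K', bicover A Bs K' -> #|K| <= #|K'|) ->
  exists f, matches_into K ((A :|: Bs) :\: K) f.
Proof.
move=> symE dAB KAB coverK minK.
have [f1 mf1] := hall (min_bicover_hall dAB coverK minK).
have minK' K' : bicover Bs A K' -> #|K| <= #|K'| by move/(bicoverC symE)/minK.
have dBA : [disjoint Bs & A] by rewrite disjoint_sym.
have [f2 mf2] := hall (min_bicover_hall dBA (bicoverC symE coverK) minK').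
have := matches_intoU mf1 mf2 (disjointW (subsetDl _ _) (subsetDl _ _) dBA).
rewrite -setIUr (setIidPl KAB) -setDUl setUC.
by exists (fun x => if x \in K :&: A then f1 x else f2 x).
Qed.

End Matching.

Lemma connected_matching_of_matches_into (T : finType) (H : rel T)
    (K Bs : {set T}) f v k :
    matches_into H K Bs f -> [disjoint K & Bs] -> K \subset component H v ->
  k <= #|K| -> connected_matching H k.
Proof.
move=> [injf fK] dKB Kv /exists_subset_card[K' K'K cardK'].
have fK' : {in K', forall s, f s \in Bs /\ H s (f s)} by move=> s /(subsetP K'K); apply: fK.
exists [set (s, f s) | s in K']; split.
- by rewrite card_imset // => s t [].
- by move=> _ /imsetP[s sK' ->]; have [] := fK' s sK'.
- move=> _ _ /imsetP[s sK' ->] /imsetP[t tK' ->] neq.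
  rewrite -setI_eq0; apply/eqP/setP=> z; rewrite !inE /=.
  have sK := subsetP K'K s sK'; have tK := subsetP K'K t tK'.
  have [fs _] := fK' s sK'; have [ft _] := fK' t tK'.
  have st : s != t by apply: contra_neq neq => ->.
  have fst : f s != f t by apply: contra_neq st; apply: injf.
  have sft : s != f t by apply: contraTneq ft => <-; rewrite (disjointFr dKB sK).
  have fts : f s != t by apply: contraTneq fs => ->; rewrite (disjointFr dKB tK).
  by apply/negP=> /andP[/orP[]/eqP-> /orP[]/eqP/eqP]; apply/negP.
- by exists v => _ /imsetP[s /(subsetP K'K) sK ->]; apply: (subsetP Kv).
Qed.

Section Bipartite.
Variables (T : finType) (adj : rel T) (V1 V2 : {set T}).
Hypothesis bipG : bipartite_graph adj V1 V2.

Lemma bipartite_graphC : bipartite_graph adj V2 V1.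
Proof.
case: bipG => symA irrA dV cV edges; split=> //.
- by rewrite disjoint_sym.
- by rewrite setUC.
- by move=> x y /edges; rewrite orbC.
Qed.

Lemma bipartite_nbr x : x \in V1 -> [set y | adj x y] \subset V2.
Proof.
case: bipG => _ _ dV _ edges x1; apply/subsetP=> y; rewrite inE => /edges.
by rewrite x1 (disjointFr dV x1) orbF.
Qed.

Lemma bipartite_card_sides (Z : {set T}) : #|Z :&: V1| + #|Z :&: V2| = #|Z|.
Proof.
case: bipG => _ _ dV cV _; rewrite -cardsUI -setIUr cV setIT -setIIr.
by rewrite (disjoint_setI0 dV) setI0 cards0 addn0.
Qed.

End Bipartite.

Section RedComponent.
Variables (T : finType) (adj : rel T) (V1 V2 : {set T}) (col : T -> T -> bool).
Variables (n N : nat) (B S : {set T}).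
Hypothesis bipG : bipartite_graph adj V1 V2.
Hypotheses (cardV1 : #|V1| = N) (cardV2 : #|V2| = N).
Hypothesis min_deg : forall x, 3 * N < 4 * deg adj x.
Hypothesis colG : coloring adj col.
Hypothesis leq_2n_N : 2 * n <= N.
Hypothesis no_blue_matching : ~ connected_matching (blue_rel adj col) n.
Hypothesis compB : is_component (blue_rel adj col) B.
Hypothesis maxB : forall v, #|component (blue_rel adj col) v| <= #|B|.
Hypotheses (nBV1 : n <= #|B :&: V1|) (nBV2 : n <= #|B :&: V2|).
Hypothesis minS : min_vertex_cover_of (blue_rel adj col) B S.

Local Notation blue := (blue_rel adj col).
Local Notation red := (red_rel adj col).
Local Notation nbr x := [set y | adj x y].

Lemma adjC : symmetric adj. Proof. by case: bipG. Qed.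

Lemma blueC : symmetric blue.
Proof.
by move=> x y; rewrite /blue_rel /= adjC; case: (boolP (adj y x)) => // /colG->.
Qed.

Lemma redC : symmetric red.
Proof.
by move=> x y; rewrite /red_rel /= adjC; case: (boolP (adj y x)) => // /colG->.
Qed.

Lemma B_closed x y : x \in B -> blue x y -> y \in B.
Proof.
by case: compB => v ->; rewrite !inE => vx bxy; apply: connect_trans vx (connect1 bxy).
Qed.

Lemma red_of_uncovered x y : x \in B :\: S -> adj x y -> y \notin S -> red x y.
Proof.
case: minS => [[_ coverS] _]; rewrite inE => /andP[xS xB] axy yS.
rewrite /red_rel /= axy; apply: contraNT yS => ncol.
have bxy : blue x y by rewrite /blue_rel /= axy.
by have := coverS x y xB (B_closed xB bxy) bxy; rewrite (negbTE xS).
Qed.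

Lemma bicover_min_cover :
  bicover blue (B :&: V1) (B :&: V2) S /\
  forall K, bicover blue (B :&: V1) (B :&: V2) K -> #|S| <= #|K|.
Proof.
case: minS => [[_ coverS] minS']; split.
  by move=> x y /setIP[xB _] /setIP[yB _]; apply: coverS.
move=> K coverK; apply: leq_trans (minS' (K :&: B) _) (subset_leq_card (subsetIl K B)).
split=> [|x y xB yB bxy]; first exact: subsetIr.
rewrite !in_setI xB yB !andbT; case: bipG => _ _ _ _ edges.
have /edges/orP[/andP[x1 y2]|/andP[x2 y1]] : adj x y by case/andP: bxy.
  by apply: coverK; rewrite ?in_setI ?xB ?yB.
by apply: (bicoverC blueC coverK); rewrite ?in_setI ?xB ?yB.
Qed.

Lemma cover_lt : #|S| < n.
Proof.
case: minS => [[SB _] _]; case: (compB) => v Bv; case: bipG => _ _ dV cV _.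
have sidesB : (B :&: V1) :|: (B :&: V2) = B by rewrite -setIUr cV setIT.
have dB : [disjoint B :&: V1 & B :&: V2] := disjointW (subsetIr _ _) (subsetIr _ _) dV.
have SBV : S \subset (B :&: V1) :|: (B :&: V2) by rewrite sidesB.
have [coverS minimal] := bicover_min_cover.
have [f] := min_bicover_matching blueC dB SBV coverS minimal.
rewrite sidesB => mf; rewrite ltnNge; apply/negP=> le_n_S; apply: no_blue_matching.
have SBv : S \subset component blue v by rewrite -Bv.
exact: (connected_matching_of_matches_into mf (disjoint_setD _ _) SBv le_n_S).
Qed.

Lemma card_nbr_gt x : 3 * N < 4 * #|nbr x|.
Proof. exact: min_deg. Qed.

Lemma nbrV1 x : x \in V1 -> nbr x \subset V2.
Proof. exact: bipartite_nbr. Qed.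

Lemma nbrV2 x : x \in V2 -> nbr x \subset V1.
Proof. exact/bipartite_nbr/bipartite_graphC. Qed.

Lemma common_nbr_gt (W : {set T}) x y :
  #|W| = N -> nbr x \subset W -> nbr y \subset W -> N < 2 * #|nbr x :&: nbr y|.
Proof.
move=> cardW xW yW; have := leq_card_setI xW yW.
have := card_nbr_gt x; have := card_nbr_gt y; lia.
Qed.

Lemma red_connect_same_side (W : {set T}) x y :
    #|W| = N -> nbr x \subset W -> nbr y \subset W ->
  x \in B :\: S -> y \in B :\: S -> connect red x y.
Proof.
move=> cardW xW yW xR yR.
have := common_nbr_gt cardW xW yW; have := cover_lt => ltSn lt_common.
have [z] : exists2 z, z \in nbr x :&: nbr y & z \notin S by apply: exists_notin; lia.
rewrite !inE => /andP[axz ayz] zS.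
apply: connect_trans (connect1 (red_of_uncovered xR axz zS)) (connect1 _).
by rewrite redC; apply: red_of_uncovered.
Qed.

Lemma blue_connect_dense (P Q : {set T}) :
    P \subset V2 -> Q \subset V1 -> N < 2 * #|P| -> N < 2 * #|Q| ->
    (forall p q, p \in P -> q \in Q -> adj p q -> blue p q) ->
  exists v, P :|: Q \subset component blue v.
Proof.
move=> PV2 QV1 bigP bigQ bluePQ.
have [q0 q0Q] : exists q0, q0 \in Q by apply/card_gt0P; lia.
have nbrQ q : q \in Q -> nbr q \subset V2 by move/(subsetP QV1)/nbrV1.
have connQ q : q \in Q -> connect blue q0 q.
  move=> qQ; have := common_nbr_gt cardV2 (nbrQ q0 q0Q) (nbrQ q qQ).
  have := leq_card_setI PV2 (subset_trans (subsetIl _ (nbr q)) (nbrQ q0 q0Q)).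
  move=> common_lb common_gt.
  have [p] : exists p, p \in P :&: (nbr q0 :&: nbr q) by apply/card_gt0P; lia.
  rewrite !inE => /and3P[pP aq0p aqp].
  apply: connect_trans (connect1 (_ : blue q0 p)) (connect1 (_ : blue p q)).
    by rewrite blueC; apply: bluePQ; rewrite // adjC.
  by apply: bluePQ; rewrite // adjC.
have connP p : p \in P -> connect blue q0 p.
  move=> pP; have pV1 : nbr p \subset V1 by apply/nbrV2/(subsetP PV2).
  have := leq_card_setI pV1 QV1; have := card_nbr_gt p => deg_p lb.
  have [q] : exists q, q \in nbr p :&: Q by apply/card_gt0P; lia.
  rewrite !inE => /andP[apq qQ].
  by apply: connect_trans (connQ q qQ) (connect1 _); rewrite blueC; apply: bluePQ.
by exists q0; apply/subsetP=> z; rewrite !inE => /orP[/connP|/connQ].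
Qed.

Lemma uncovered_side_lt (U : {set T}) y :
    #|U| = N -> nbr y \subset U -> {in (B :\: S) :&: U, forall u, ~~ adj y u} ->
  4 * #|(B :\: S) :&: U| < N.
Proof.
move=> cardU yU no_adj; have := leq_card_setI (subsetIr (B :\: S) U) yU.
have -> : (B :\: S) :&: U :&: nbr y = set0.
  by apply/setP=> u; rewrite [in RHS]inE; apply/setIP=> -[/no_adj]; rewrite inE => /negbTE->.
by have := card_nbr_gt y; rewrite cards0; lia.
Qed.

Lemma card_nbr_uncovered (W : {set T}) x :
  nbr x \subset W -> #|nbr x| <= #|nbr x :\: S| + #|S :&: W|.
Proof.
move=> xW; rewrite -(cardsID S (nbr x)) addnC leq_add2l subset_leq_card //.
by rewrite setIC setIS.
Qed.

Lemma card_B_split (U : {set T}) : #|B :&: U| = #|(B :\: S) :&: U| + #|S :&: U|.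
Proof.
case: minS => [[/subsetP SB _] _]; rewrite -(cardsID S (B :&: U)) addnC.
congr (_ + _); apply: eq_card => z; rewrite !inE; first by rewrite andbA.
by rewrite andbC; case: (boolP (z \in S)) => // /SB ->.
Qed.

Lemma red_edge_between_nbrs x y :
    x \in (B :\: S) :&: V1 -> y \in (B :\: S) :&: V2 ->
    {in (B :\: S) :&: V1 & (B :\: S) :&: V2, forall u w, ~~ adj u w} ->
  [exists p in nbr x :\: S, exists q in nbr y :\: S, red p q].
Proof.
move=> /setIP[xR x1] /setIP[yR y2] no_cross; apply: contraT => no_red.
have small1 : 4 * #|(B :\: S) :&: V1| < N.
  apply: (uncovered_side_lt cardV1 (nbrV2 y2)) => u uR1.
  by rewrite adjC; apply: no_cross; rewrite // inE yR.
have small2 : 4 * #|(B :\: S) :&: V2| < N.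
  by apply: (uncovered_side_lt cardV2 (nbrV1 x1)) => w wR2; apply: no_cross; rewrite // inE xR.
have bigP := card_nbr_uncovered (nbrV1 x1); have bigQ := card_nbr_uncovered (nbrV2 y2).
have := card_B_split V1; have := card_B_split V2; have := bipartite_card_sides bipG S.
have := bipartite_card_sides bipG B; have := card_nbr_gt x; have := card_nbr_gt y.
have := cover_lt => ltSn degy degx sidesB sidesS sidesB2 sidesB1.
set P := nbr x :\: S in no_red bigP *; set Q := nbr y :\: S in no_red bigQ *.
have PV2 : P \subset V2 := subset_trans (subsetDl _ _) (nbrV1 x1).
have QV1 : Q \subset V1 := subset_trans (subsetDl _ _) (nbrV2 y2).
have bluePQ p q : p \in P -> q \in Q -> adj p q -> blue p q.
  move=> pP qQ apq; rewrite /blue_rel /= apq; apply: contra no_red => cpq.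
  by apply/exists_inP; exists p => //; apply/exists_inP; exists q; rewrite // /red_rel /= apq.
have [v PQv] := blue_connect_dense PV2 QV1 ltac:(lia) ltac:(lia) bluePQ.
have PQ0 : P :&: Q = set0.
  case: bipG => _ _ dV _ _; apply/disjoint_setI0; rewrite disjoint_sym.
  exact: disjointW QV1 PV2 dV.
have := cardsUI P Q; have := subset_leq_card PQv; have := maxB v.
(* |P| + |Q| > 3N/2 - |S| >= N/2 + |S| > |B| *)
rewrite PQ0 cards0; lia.
Qed.

Lemma red_connect_across x y :
  x \in (B :\: S) :&: V1 -> y \in (B :\: S) :&: V2 -> connect red x y.
Proof.
move=> xR1 yR2; have /setIP[xR x1] := xR1; have /setIP[yR y2] := yR2.
have [/exists_inP[u /setIP[uR u1] /exists_inP[w /setIP[wR w2] auw]]|no_cross] :=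
  boolP [exists u in (B :\: S) :&: V1, exists w in (B :\: S) :&: V2, adj u w].
  have wS : w \notin S by case/setDP: wR.
  apply: connect_trans (red_connect_same_side cardV2 (nbrV1 x1) (nbrV1 u1) xR uR) _.
  apply: connect_trans (connect1 (red_of_uncovered uR auw wS)) _.
  exact: red_connect_same_side cardV1 (nbrV2 w2) (nbrV2 y2) wR yR.
have /exists_inP[p /setDP[xp pS] /exists_inP[q /setDP[yq qS] rpq]] :
    [exists p in nbr x :\: S, exists q in nbr y :\: S, red p q].
  apply: red_edge_between_nbrs => // u w uR1 wR2; apply: contra no_cross => auw.
  by apply/exists_inP; exists u => //; apply/exists_inP; exists w.
rewrite inE in xp; rewrite inE in yq.
apply: connect_trans (connect1 (red_of_uncovered xR xp pS)) _.
by apply: connect_trans (connect1 rpq) (connect1 _); rewrite redC; apply: red_of_uncovered.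
Qed.

Lemma red_connect_uncovered x y : x \in B :\: S -> y \in B :\: S -> connect red x y.
Proof.
have sides z : (z \in V1) || (z \in V2) by case: bipG => _ _ _ cV _; rewrite -in_setU cV inE.
move=> xR yR; case/orP: (sides x) => x_side; case/orP: (sides y) => y_side.
- exact: red_connect_same_side cardV2 (nbrV1 x_side) (nbrV1 y_side) xR yR.
- by apply: red_connect_across; rewrite inE ?xR ?yR.
- by rewrite (sym_connect_sym redC); apply: red_connect_across; rewrite inE ?xR ?yR.
- exact: red_connect_same_side cardV1 (nbrV2 x_side) (nbrV2 y_side) xR yR.
Qed.

End RedComponent.

Theorem lemma3p2 (m n : nat) (T : finType) (adj : rel T) (V1 V2 : {set T})
  (col : T -> T -> bool) (B S : {set T}) :
  0 < n -> n < m ->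
  bipartite_graph adj V1 V2 ->
  #|V1| = m + n - 1 -> #|V2| = m + n - 1 ->
  (forall x, 3 * (m + n - 1) < 4 * deg adj x) ->
  coloring adj col ->
  ~ connected_matching (blue_rel adj col) n ->
  is_component (blue_rel adj col) B ->
  (forall v, #|component (blue_rel adj col) v| <= #|B|) ->
  n <= #|B :&: V1| -> n <= #|B :&: V2| ->
  min_vertex_cover_of (blue_rel adj col) B S ->
  exists v, B :\: S \subset component (red_rel adj col) v.
Proof.
move=> _ lt_nm bipG cardV1 cardV2 min_deg colG no_blue compB maxB nBV1 nBV2 minS.
have leq_2n_N : 2 * n <= m + n - 1 by lia.
have [R0|[w wR]] := set_0Vmem (B :\: S).
  by case: compB => v _; exists v; rewrite R0 sub0set.
exists w; apply/subsetP=> u uR; rewrite inE.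
exact: (red_connect_uncovered bipG cardV1 cardV2 min_deg colG leq_2n_N no_blue compB maxB
  nBV1 nBV2 minS wR uR).
Qed.
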